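(* Let $0\le k\le n$ be integers and let $H\le\mathrm{Sym}_n$ be the stabiliser of a $k$-element subset of $\{1,\dots,n\}$, so $H\cong\mathrm{Sym}_k\times\mathrm{Sym}_{n-k}$. Then for every subgroup $G\le\mathrm{Sym}_n$, \[ |Z_{\mathrm{Sym}_n}(G)|\le 2^n|Z_H(G)| . \] In addition, let $u:\mathbb N\to\mathbb R$ be a function such that $u(m)^{-1}|K|^{1/2}\le|K[2]|\le u(m)|K|^{1/2}$ for every $m$ and every $K\le\mathrm{Sym}_m$. Then \[ |Z_{\mathrm{Sym}_n}(G)[2]|\le 2^n u(n)^2\,|Z_H(G)[2]| . \]
   Context: $Z_X(G)$ denotes the centraliser of $G$ in $X$, i.e. the elements of $X$ commuting with every element of $G$. For a group $K$, $K[2]=\{g\in K:g^2=1\}$ (including the identity). A function $u$ as in the hypothesis exists with $\log u(n)=O(n\log\log n)$. *)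

From HB Require Import structures.
From mathcomp Require Import all_boot all_order all_algebra all_fingroup.
Set Implicit Arguments. Unset Strict Implicit. Unset Printing Implicit Defensive.
Import Order.TTheory GRing.Theory Num.Theory.

(* Sym_n is modelled as the full permutation group of 'I_n = {0,..,n-1}. *)

Definition set_stab (n : nat) (S : {set 'I_n}) : {set {perm 'I_n}} :=
  [set g : {perm 'I_n} | g @: S == S].

(* K[2] = { g in K | g^2 = 1 } (identity included). *)
Definition inv2 (gT : finGroupType) (K : {set gT}) : {set gT} :=
  [set x in K | (x ^+ 2 == 1)%g].

(* The centraliser C(G) acts on the subsets of {1,..,n} and the stabiliser of S
   in it is exactly C_H(G); since an orbit has at most 2^n elements, the
   orbit-stabiliser theorem gives |C(G)| <= 2^n |C_H(G)| for any S whatsoever.  The square-root law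
   then transfers this to involutions:
   |C(G)[2]| <= u |C(G)|^(1/2) <= u 2^(n/2) |C_H(G)|^(1/2) <= u^2 2^n |C_H(G)[2]|. *)
From HB Require Import structures.
From mathcomp Require Import all_boot all_order all_algebra all_fingroup.
Set Implicit Arguments.
Unset Strict Implicit.
Unset Printing Implicit Defensive.

Import Order.TTheory GRing.Theory Num.Theory.

Lemma card_finset (T : finType) : #|{set T}| = 2 ^ #|T|.
Proof. by rewrite -[LHS]cardsT -powersetT card_powerset cardsT. Qed.

Lemma card_le_mul_card_astab1 (aT : finGroupType) (D : {group aT}) (rT : finType)
    (to : action D rT) (A : {group aT}) (x : rT) :
  A \subset D -> #|A| <= #|rT| * #|'C_A[x | to]%g|.
Proof.
move=> sAD; rewrite -(card_orbit_in_stab to x sAD) leq_mul2r.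
by rewrite max_card orbT.
Qed.

Lemma set_stab_astab1 (n : nat) (S : {set 'I_n}) : set_stab S = 'C[S | 'P^*]%g.
Proof. by apply/setP=> g; rewrite inE; apply/eqP/astab1P; rewrite /= setactE. Qed.

Lemma set_stab_group_set (n : nat) (S : {set 'I_n}) : group_set (set_stab S).
Proof. by rewrite set_stab_astab1 groupP. Qed.

Canonical set_stab_group (n : nat) (S : {set 'I_n}) := Group (set_stab_group_set S).

Lemma card_cent_le_set_stab (n : nat) (S : {set 'I_n}) (G : {group {perm 'I_n}}) :
  #|'C(G)%g| <= 2 ^ n * #|'C_(set_stab S)(G)%g|.
Proof.
have := @card_le_mul_card_astab1 _ _ _ ('P^*)%act 'C(G)%G S (subsetT _).
rewrite card_finset card_ord set_stab_astab1 setIC.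
by congr (_ <= _ * #|_|)%N; apply/setP=> g; rewrite !inE.
Qed.

Local Open Scope ring_scope.

Lemma sqrtr_nat_le (R : rcfType) (m : nat) : Num.sqrt (m%:R : R) <= m%:R.
Proof.
case: m => [|m]; first by rewrite sqrtr0.
have s_ge1 : 1 <= Num.sqrt (m.+1%:R : R) by rewrite -{1}sqrtr1 ler_sqrt ?ler0n // ler1n.
rewrite -{2}[m.+1%:R](@sqr_sqrtr R) ?ler0n // expr2.
by rewrite ler_peMl // (le_trans ler01 s_ge1).
Qed.

Lemma card_inv2_1 (gT : finGroupType) : #|inv2 [1 gT]%g| = 1%N.
Proof.
suff -> : inv2 [1 gT]%g = [set 1%g] by rewrite cards1.
by apply/setP=> x; rewrite !inE andb_idr // => /eqP->; rewrite expg1n.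
Qed.

Section SquareRootLaw.

Variables (R : rcfType) (u : nat -> R).
Hypothesis card_inv2_sqrt : forall (m : nat) (K : {group {perm 'I_m}}),
  (u m)^-1 * Num.sqrt (#|K|%:R) <= (#|inv2 K|%:R : R) /\
  (#|inv2 K|%:R : R) <= u m * Num.sqrt (#|K|%:R).

Lemma sqrt_law_ge1 (m : nat) : 1 <= u m.
Proof. by have [_] := @card_inv2_sqrt m 1%G; rewrite card_inv2_1 cards1 sqrtr1 mulr1. Qed.

Lemma sqrt_card_le_inv2 (m : nat) (K : {group {perm 'I_m}}) :
  Num.sqrt (#|K|%:R) <= u m * #|inv2 K|%:R.
Proof.
have u_gt0 : 0 < u m := lt_le_trans ltr01 (sqrt_law_ge1 m).
have [lb _] := card_inv2_sqrt K.
by rewrite -ler_pdivrMl ?invr_gt0 // invrK mulrC.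
Qed.

Lemma card_inv2_le_of_card_le (m N : nat) (A B : {group {perm 'I_m}}) :
  (#|A| <= N * #|B|)%N -> #|inv2 A|%:R <= N%:R * u m ^+ 2 * #|inv2 B|%:R.
Proof.
move=> le_AB; have u_ge0 : 0 <= u m := le_trans ler01 (sqrt_law_ge1 m).
have [_ /le_trans] := card_inv2_sqrt A; apply.
have sqrt_AB : Num.sqrt (#|A|%:R) <= Num.sqrt (N%:R) * Num.sqrt (#|B|%:R : R).
  by rewrite -sqrtrM ?ler0n // ler_wsqrtr // -natrM ler_nat.
have sqrt_B := sqrt_card_le_inv2 B.
apply: le_trans (ler_wpM2l u_ge0 sqrt_AB) _.
apply: le_trans (ler_wpM2l u_ge0 (ler_pM _ _ (sqrtr_nat_le R N) sqrt_B)) _;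
  rewrite ?sqrtr_ge0 //.
by rewrite expr2 !mulrA [u m * _]mulrC.
Qed.

End SquareRootLaw.

Theorem lemmaA3 (n k : nat) (S : {set 'I_n}) (hk : (k <= n)%N) (hS : #|S| = k)
    (G : {group {perm 'I_n}}) :
  (#|('C(G))%g| <= 2 ^ n * #|('C_(set_stab S)(G))%g|)%N /\
  (forall (R : rcfType) (u : nat -> R),
     (forall (m : nat) (K : {group {perm 'I_m}}),
        (u m)^-1 * Num.sqrt (#|K|%:R) <= (#|inv2 K|%:R : R) /\
        (#|inv2 K|%:R : R) <= u m * Num.sqrt (#|K|%:R)) ->
     (#|inv2 ('C(G))%g|%:R : R) <= 2%:R ^+ n * u n ^+ 2 * #|inv2 ('C_(set_stab S)(G))%g|%:R).
Proof.
split=> [|R u card_inv2_sqrt]; first exact: card_cent_le_set_stab.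
rewrite -natrX.
exact: card_inv2_le_of_card_le card_inv2_sqrt _ _ _ _ (card_cent_le_set_stab S G).
Qed.
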